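(* Let $(\rho,\sigma)\in\mathfrak V$ with $\sigma\le0$ and $P,Q\in W^{(l)}\setminus\{0\}$. If $\ell_{\rho,\sigma}(P)=\sum_{i=0}^{\alpha}\lambda_ix^{\frac rl-\frac{i\sigma}\rho}y^{s+i}$ and $\ell_{\rho,\sigma}(Q)=\sum_{j=0}^{\beta}\mu_jx^{\frac ul-\frac{j\sigma}\rho}y^{v+j}$ with $\lambda_0,\lambda_\alpha,\mu_0,\mu_\beta\neq0$, then $$[P,Q]_{\rho,\sigma}=\sum_{i=0}^{\alpha}\sum_{j=0}^{\beta}\lambda_i\mu_jc_{ij}\,x^{\frac{r+u}{l}-\frac{(i+j)\sigma}{\rho}-1}y^{s+v+i+j-1},$$ where $c_{ij}=\bigl(\frac ul-\frac{j\sigma}\rho,\,v+j\bigr)\times\bigl(\frac rl-\frac{i\sigma}\rho,\,s+i\bigr)$ and $(a_1,a_2)\times(b_1,b_2):=a_1b_2-a_2b_1$.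
   Context: $K$ is a field of characteristic zero, $l\in\mathbb{N}$. $W^{(l)}$ is the associative $K$-algebra with $K$-basis $\{X^{i/l}Y^j:i\in\mathbb{Z},j\in\mathbb{N}_0\}$, powers of $X$ multiplying as Laurent monomials and $[Y,X^\alpha]=\alpha X^{\alpha-1}$ for $\alpha\in\frac1l\mathbb{Z}$. $L^{(l)}=K[x^{\pm1/l},y]$, $\Psi^{(l)}(X^{i/l}Y^j)=x^{i/l}y^j$ ($K$-linear); supports are sets of exponents with nonzero coefficient. $\mathfrak V=\{(\rho,\sigma)\in\mathbb{Z}^2:\gcd(\rho,\sigma)=1,\rho+\sigma>0\}$. For $P\ne0$, $v_{\rho,\sigma}(P)=\max\{\rho a+\sigma b:(a,b)\in\mathrm{Supp}(P)\}$, $\ell_{\rho,\sigma}(P)\in L^{(l)}$ = sum of terms of $\Psi^{(l)}(P)$ attaining it. $[P,Q]_{\rho,\sigma}:=0$ if $[P,Q]=0$ or $v_{\rho,\sigma}([P,Q])<v_{\rho,\sigma}(P)+v_{\rho,\sigma}(Q)-(\rho+\sigma)$, and $:=\ell_{\rho,\sigma}([P,Q])$ otherwise. *)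

From HB Require Import structures.
From mathcomp Require Import all_boot all_order all_algebra.
Set Implicit Arguments. Unset Strict Implicit. Unset Printing Implicit Defensive.
Import Order.TTheory GRing.Theory Num.Theory.
Local Open Scope ring_scope.

(* An element of W^(l) is given by a finite formal sum of terms
   c * X^(i/l) Y^j, stored as a list of (c, (i, j)) with i : int, j : nat.
   Two lists represent the same element iff they have the same coefficient
   function [Wcoef]; all notions below only depend on [Wcoef]. *)
Section W.
Variable K : fieldType.
Definition Welt := seq (K * (int * nat)).

Definition Wcoef (P : Welt) (i : int) (j : nat) : K :=
  \sum_(m <- P | m.2 == (i, j)) m.1.

Definition Wcoefr (l : nat) (P : Welt) (a : rat) (b : nat) : K :=
  \sum_(m <- P | (m.2.2 == b) && ((m.2.1)%:~R / l%:R == a)) m.1.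

Definition Wnz (P : Welt) : bool := has (fun m => Wcoef P m.2.1 m.2.2 != 0) P.

Definition ffall (b : rat) (k : nat) : rat := \prod_(t < k) (b - t%:R).

(* (c1 X^(i1/l) Y^j1) (c2 X^(i2/l) Y^j2)
   = sum_k C(j1,k) (i2/l)_k c1 c2 X^((i1+i2)/l - k) Y^(j1+j2-k),
   using Y X^b = X^b Y + b X^(b-1). *)
Definition monmul (l : nat) (m1 m2 : K * (int * nat)) : Welt :=
  [seq (m1.1 * m2.1 * ('C(m1.2.2, k))%:R
          * ratr (ffall ((m2.2.1)%:~R / l%:R) k),
        (m1.2.1 + m2.2.1 - (k * l)%:Z, (m1.2.2 + m2.2.2 - k)%N))
  | k <- iota 0 m1.2.2.+1].

Definition Wmul (l : nat) (P Q : Welt) : Welt :=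
  flatten [seq monmul l m1 m2 | m1 <- P, m2 <- Q].

Definition Wopp (P : Welt) : Welt := [seq (- m.1, m.2) | m <- P].

Definition Wcomm (l : nat) (P Q : Welt) : Welt := Wmul l P Q ++ Wopp (Wmul l Q P).

Definition wt (l : nat) (rho sigma : int) (i : int) (j : nat) : rat :=
  rho%:~R * ((i%:~R) / l%:R) + sigma%:~R * j%:R.

(* v_{rho,sigma}(P): maximum of the weights over the support (meaningful for P <> 0) *)
Definition vW (l : nat) (rho sigma : int) (P : Welt) : rat :=
  let s := [seq wt l rho sigma m.2.1 m.2.2 | m <- P & Wcoef P m.2.1 m.2.2 != 0] in
  match s with [::] => 0 | w :: s' => foldr Num.max w s' end.

(* ell_{rho,sigma}(P) in L^(l), as its coefficient function
   (x^a y^b, a rational, b natural) *)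
Definition ellW (l : nat) (rho sigma : int) (P : Welt) (a : rat) (b : nat) : K :=
  if rho%:~R * a + sigma%:~R * b%:R == vW l rho sigma P then Wcoefr l P a b else 0.

Definition Wbr (l : nat) (rho sigma : int) (P Q : Welt) (a : rat) (b : nat) : K :=
  let C := Wcomm l P Q in
  if Wnz C && (vW l rho sigma P + vW l rho sigma Q - (rho + sigma)%:~R
                 <= vW l rho sigma C)
  then ellW l rho sigma C a b else 0.

Definition monoL (a0 : rat) (b0 : int) (a : rat) (b : nat) : K :=
  if (a == a0) && (b%:Z == b0) then 1 else 0.

End W.

Definition cross (a b : rat * rat) : rat := a.1 * b.2 - a.2 * b.1.

From HB Require Import structures.
From mathcomp Require Import all_boot all_order all_algebra.
From mathcomp Require Import ring lra.
Import Order.TTheory GRing.Theory Num.Theory.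
Set Implicit Arguments. Unset Strict Implicit. Unset Printing Implicit Defensive.
Local Open Scope ring_scope.

(* Write monomials of W^(l) with X on the left. Moving Y^j past X^a gives
   Y^j X^a = X^a Y^j + j a X^(a-1) Y^(j-1) + ..., whose term of order t lowers the
   (rho, sigma)-weight by t (rho + sigma) > 0. In [P, Q] = PQ - QP the terms of
   order 0 cancel, so nothing of weight above v(P) + v(Q) - (rho + sigma) survives,
   and at that weight only the order-one terms of products of leading monomials
   remain: x^a1 y^b1 and x^a2 y^b2 contribute (a2 b1 - a1 b2) x^(a1+a2-1) y^(b1+b2-1).
   All leading monomials of P (resp. Q) have the same weight, hence so do these,
   and the bracket is exactly their sum. *)

Section RatrCharZero.
Variable K : fieldType.
Hypothesis K0 : [pchar K] =i pred0.

Lemma pchar0_intr_eq0 (z : int) : (z%:~R == 0 :> K) = (z == 0).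
Proof.
have natK0 := (pcharf0P K).1 K0.
by case: z => n; rewrite ?NegzE ?mulrNz ?oppr_eq0 natK0.
Qed.

Lemma pchar0_ratr_frac (n d : int) : d != 0 ->
  ratr (n%:~R / d%:~R) = n%:~R / d%:~R :> K.
Proof.
move=> d0; set x := (n%:~R / d%:~R : rat).
have den0 : (denq x)%:~R != 0 :> K by rewrite pchar0_intr_eq0 denq_neq0.
have d0K : d%:~R != 0 :> K by rewrite pchar0_intr_eq0.
have cross_mul : numq x * d = n * denq x.
  apply: (@intr_inj rat); rewrite !rmorphM /= numqE /x; field.
  by rewrite intr_eq0.
rewrite /ratr; apply: (mulIf d0K); rewrite divfK //.
apply: (mulIf den0); rewrite mulrAC divfK //.
by rewrite -!rmorphM /= cross_mul.
Qed.

Lemma pchar0_ratrB (x y : rat) : ratr (x - y) = ratr x - ratr y :> K.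
Proof.
rewrite -[x]divq_num_den -[y]divq_num_den.
have dx := denq_neq0 x; have dy := denq_neq0 y.
have -> : (numq x)%:~R / (denq x)%:~R - (numq y)%:~R / (denq y)%:~R
        = (numq x * denq y - numq y * denq x)%:~R / (denq x * denq y)%:~R :> rat.
  rewrite !rmorphB !rmorphM /=; field.
  by rewrite !intr_eq0 dx dy.
rewrite !pchar0_ratr_frac ?mulf_neq0 // !rmorphB !rmorphM /=; field.
by rewrite !pchar0_intr_eq0 dx dy.
Qed.

Lemma pchar0_ratrM (x y : rat) : ratr (x * y) = ratr x * ratr y :> K.
Proof.
rewrite -[x]divq_num_den -[y]divq_num_den.
have dx := denq_neq0 x; have dy := denq_neq0 y.
have -> : (numq x)%:~R / (denq x)%:~R * ((numq y)%:~R / (denq y)%:~R)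
        = (numq x * numq y)%:~R / (denq x * denq y)%:~R :> rat.
  by rewrite !rmorphM /= mulf_div.
by rewrite !pchar0_ratr_frac ?mulf_neq0 // !rmorphM /= mulf_div.
Qed.
End RatrCharZero.

Lemma big_pred1_seq (R : nmodType) (I : eqType) (r : seq I) (j : I) (F : I -> R) :
  uniq r -> j \in r -> \sum_(i <- r | i == j) F i = F j.
Proof.
move=> ur jr; rewrite big_mkcond (bigD1_seq j) //= eqxx big1 ?addr0 //.
by move=> i /negbTE ->.
Qed.

Lemma sum_neq0_has (R : nmodType) (I : Type) (r : seq I) (P : pred I) (F : I -> R) :
  \sum_(i <- r | P i) F i != 0 -> has P r.
Proof.
apply: contraNT; elim: r => [|x r IH] /=; first by rewrite big_nil.
by rewrite big_cons; case: (P x) => //= /IH.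
Qed.

Lemma foldr_max_ub (R : realDomainType) (w : R) (s : seq R) x :
  x \in w :: s -> x <= foldr Num.max w s.
Proof.
elim: s x => [|y s IH] x /=; first by rewrite inE => /eqP ->.
rewrite !inE le_max => /or3P [/eqP ->|/eqP ->|xs]; rewrite ?lexx ?orbT //.
  by rewrite IH ?mem_head ?orbT.
by rewrite IH ?orbT // inE xs orbT.
Qed.

Lemma foldr_max_mem (R : realDomainType) (w : R) (s : seq R) :
  foldr Num.max w s \in w :: s.
Proof.
elim: s => [|y s IH] /=; first by rewrite mem_head.
case: (leP y (foldr Num.max w s)) => _; last by rewrite !inE eqxx orbT.
by move: IH; rewrite !inE => /orP [->|->]; rewrite ?orbT.
Qed.

Section WeylBracket.
Variables (K : fieldType) (l : nat) (rho sigma : int).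
Hypothesis l_gt0 : (0 < l)%N.
Hypothesis rs_gt0 : 0 < rho + sigma.

Definition Wkeys (P : Welt K) : seq (int * nat) := undup [seq m.2 | m <- P].

Definition Wexp (k : int * nat) : rat * nat := (k.1%:~R / l%:R, k.2).

Definition exp_ind (a : rat) (b : nat) (k : int * nat) : K :=
  if (k.2 == b) && (k.1%:~R / l%:R == a) then 1 else 0.

Lemma sum_Wterms (P : Welt K) (g : int * nat -> K) :
  \sum_(m <- P) m.1 * g m.2 = \sum_(k <- Wkeys P) Wcoef P k.1 k.2 * g k.
Proof.
rewrite /Wcoef.
under [RHS]eq_bigr => k _ do rewrite -surjective_pairing big_distrl big_mkcond /=.
rewrite exchange_big /=; apply: eq_big_seq => m mP; rewrite -big_mkcond /=.
under eq_bigl => k do rewrite eq_sym.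
by rewrite big_pred1_seq ?undup_uniq // mem_undup; apply: map_f.
Qed.

Lemma WcoefrE (P : Welt K) a b :
  Wcoefr l P a b = \sum_(m <- P) m.1 * exp_ind a b m.2.
Proof.
rewrite /Wcoefr big_mkcond; apply: eq_bigr => m _.
by rewrite /exp_ind; case: ifP; rewrite ?mulr1 ?mulr0.
Qed.

Lemma Wcoefr_Wcomm (P Q : Welt K) a b :
  Wcoefr l (Wcomm l P Q) a b = Wcoefr l (Wmul l P Q) a b - Wcoefr l (Wmul l Q P) a b.
Proof.
rewrite !WcoefrE /Wcomm big_cat /= /Wopp big_map -sumrN.
by congr (_ + _); apply: eq_bigr => m _; rewrite mulNr.
Qed.

Definition monmul_coef (k1 k2 : int * nat) (a : rat) (b : nat) : K :=
  \sum_(t <- iota 0 k1.2.+1)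
    (if ((k1.2 + k2.2 - t)%N == b) && ((k1.1 + k2.1 - (t * l)%N%:Z)%:~R / l%:R == a)
     then ('C(k1.2, t))%:R * ratr (ffall (k2.1%:~R / l%:R) t) else 0).

Lemma Wcoefr_monmul (m1 m2 : K * (int * nat)) a b :
  Wcoefr l (monmul l m1 m2) a b = m1.1 * m2.1 * monmul_coef m1.2 m2.2 a b.
Proof.
rewrite WcoefrE /monmul big_map /monmul_coef big_distrr; apply: eq_bigr => t _.
by rewrite /exp_ind /=; case: ifP; rewrite ?mulr1 ?mulr0 // !mulrA.
Qed.

Lemma Wcoefr_Wmul (P Q : Welt K) a b :
  Wcoefr l (Wmul l P Q) a b =
  \sum_(k1 <- Wkeys P) Wcoef P k1.1 k1.2 *
     \sum_(k2 <- Wkeys Q) Wcoef Q k2.1 k2.2 * monmul_coef k1 k2 a b.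
Proof.
rewrite /Wmul WcoefrE big_flatten /= big_allpairs_dep /= -sum_Wterms.
apply: eq_bigr => m1 _; rewrite -sum_Wterms big_distrr /=; apply: eq_bigr => m2 _.
by rewrite -WcoefrE Wcoefr_monmul mulrA.
Qed.

Lemma l_neq0 : (l%:R : rat) != 0.
Proof. by rewrite pnatr_eq0 -lt0n. Qed.

Lemma Wexp_inj : injective Wexp.
Proof.
move=> [i1 j1] [i2 j2] [e1 ->]; congr (_, _); apply/eqP.
by rewrite -(eqr_int rat) -(inj_eq (mulIf (invr_neq0 l_neq0))) e1.
Qed.

Lemma Wcoefr_Wexp (P : Welt K) k : Wcoefr l P (Wexp k).1 (Wexp k).2 = Wcoef P k.1 k.2.
Proof.
rewrite /Wcoefr /Wcoef; apply: eq_bigl => -[c [i j]] /=.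
rewrite (inj_eq (mulIf (invr_neq0 l_neq0))) eqr_int.
by case: k => i' j'; rewrite xpair_eqE andbC.
Qed.

Definition weight (a : rat) (b : nat) : rat := rho%:~R * a + sigma%:~R * b%:R.

Definition wkey (k : int * nat) : rat := wt l rho sigma k.1 k.2.

Lemma weight_Wexp k : weight (Wexp k).1 (Wexp k).2 = wkey k.
Proof. by []. Qed.

Lemma weight_monmul_term (k1 k2 : int * nat) (t : nat) : (t <= k1.2 + k2.2)%N ->
  weight ((k1.1 + k2.1 - (t * l)%N%:Z)%:~R / l%:R) (k1.2 + k2.2 - t)%N =
  wkey k1 + wkey k2 - t%:R * (rho + sigma)%:~R.
Proof.
move=> le_t; rewrite /weight /wkey /wt natrB // !intrB !intrD natrD.
have -> : ((t * l)%N%:Z)%:~R = (t * l)%:R :> rat by [].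
by rewrite natrM; field; apply: l_neq0.
Qed.

Definition exp_sum_ind (k1 k2 : int * nat) (a : rat) (b : nat) : K :=
  if ((k1.2 + k2.2)%N == b) && ((k1.1 + k2.1)%:~R / l%:R == a) then 1 else 0.

Lemma exp_sum_indC k1 k2 a b : exp_sum_ind k1 k2 a b = exp_sum_ind k2 k1 a b.
Proof. by rewrite /exp_sum_ind addnC addrC. Qed.

(* The term of order one of Y^j1 X^a2 = X^a2 Y^j1 + j1 a2 X^(a2 - 1) Y^(j1 - 1) + ... *)
Definition deriv_coef (p q : rat * nat) (a : rat) (b : nat) : K :=
  if (p.1 + q.1 - 1 == a) && ((p.2 + q.2)%N%:Z - 1 == b%:Z)
  then p.2%:R * ratr q.1 else 0.

(* Terms of order [t >= 2] have weight at most [wkey k1 + wkey k2 - 2 (rho + sigma)]. *)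
Lemma monmul_coef_split k1 k2 a b :
  wkey k1 + wkey k2 - (rho + sigma)%:~R <= weight a b ->
  monmul_coef k1 k2 a b = exp_sum_ind k1 k2 a b + deriv_coef (Wexp k1) (Wexp k2) a b.
Proof.
move=> hw; rewrite /monmul_coef /= big_cons; congr (_ + _).
  rewrite /exp_sum_ind subn0 mul0n subr0 bin0 /ffall big_ord0.
  by case: ifP => //; rewrite (ratr_nat _ 1) mulr1.
case: k1 hw => i1 [|j1] hw /=.
  by rewrite big_nil /deriv_coef; case: ifP => //; rewrite mul0r.
rewrite big_cons big1_seq ?addr0.
  rewrite /deriv_coef /= bin1 /ffall big_ord1 subr0 mul1n.
  have -> : (i1 + k2.1 - l%:Z)%:~R / l%:R = i1%:~R / l%:R + k2.1%:~R / l%:R - 1 :> rat.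
    by rewrite intrB intrD; field; apply: l_neq0.
  have -> : (j1.+1 + k2.2)%N%:Z - 1 = (j1 + k2.2)%N%:Z by rewrite addSn -addn1 PoszD addrK.
  by rewrite addSn subn1 /= eqz_nat andbC; case: ifP.
move=> t /andP [_]; rewrite mem_iota => /andP [t_ge2 t_lt].
case: ifP => // /andP [/eqP eb /eqP ea]; exfalso.
have le_t : (t <= j1.+1 + k2.2)%N by rewrite (leq_trans _ (leq_addr _ _)) // -ltnS -add2n.
move: hw; rewrite -ea -eb (@weight_monmul_term (i1, j1.+1)) //=.
have : 2%:R <= t%:R :> rat by rewrite ler_nat.
have : 0 < (rho + sigma)%:~R :> rat by rewrite ltr0z.
by nra.
Qed.

Definition pb_coef (p q : rat * nat) (a : rat) (b : nat) : K :=
  deriv_coef p q a b - deriv_coef q p a b.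

Lemma Wcoefr_Wcomm_split (P Q : Welt K) (VP VQ : rat) a b :
  (forall k, Wcoef P k.1 k.2 != 0 -> wkey k <= VP) ->
  (forall k, Wcoef Q k.1 k.2 != 0 -> wkey k <= VQ) ->
  VP + VQ - (rho + sigma)%:~R <= weight a b ->
  Wcoefr l (Wcomm l P Q) a b =
  \sum_(k1 <- Wkeys P) Wcoef P k1.1 k1.2 *
    \sum_(k2 <- Wkeys Q) Wcoef Q k2.1 k2.2 * pb_coef (Wexp k1) (Wexp k2) a b.
Proof.
move=> leP leQ hw; rewrite Wcoefr_Wcomm !Wcoefr_Wmul.
under eq_bigr => k1 _ do rewrite big_distrr /=.
under [X in _ - X]eq_bigr => k2 _ do rewrite big_distrr /=.
rewrite [X in _ - X]exchange_big /= -sumrB; apply: eq_bigr => k1 _.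
rewrite big_distrr -sumrB /=; apply: eq_bigr => k2 _.
have [->|c1] := eqVneq (Wcoef P k1.1 k1.2) 0; first by rewrite !mul0r mulr0 subrr.
have [->|c2] := eqVneq (Wcoef Q k2.1 k2.2) 0; first by rewrite !mul0r mulr0 subrr.
have := leP _ c1; have := leQ _ c2 => le2 le1.
rewrite !monmul_coef_split; [|lra|lra].
by rewrite (exp_sum_indC k2) /pb_coef; ring.
Qed.

Lemma deriv_coef_weight p q a b : deriv_coef p q a b != 0 ->
  weight a b = weight p.1 p.2 + weight q.1 q.2 - (rho + sigma)%:~R.
Proof.
rewrite /deriv_coef /weight; case: ifP => [/andP [/eqP <- /eqP eb] _|]; last by rewrite eqxx.
have -> : (b%:R : rat) = (p.2 + q.2)%:R - 1 by rewrite -[b%:R]/((b%:Z)%:~R) -eb intrB.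
rewrite natrD intrD; ring.
Qed.

Lemma pb_coef_eq0 k1 k2 a b : wkey k1 + wkey k2 - (rho + sigma)%:~R < weight a b ->
  pb_coef (Wexp k1) (Wexp k2) a b = 0.
Proof.
move=> hw; rewrite /pb_coef.
suff deriv0 p q : weight p.1 p.2 + weight q.1 q.2 - (rho + sigma)%:~R < weight a b ->
    deriv_coef p q a b = 0.
  by rewrite !deriv0 ?subrr // [weight _ _ + _]addrC.
by move=> lt; apply/eqP; apply: contraTT lt => /deriv_coef_weight ->; rewrite ltxx.
Qed.

Lemma wkey_le_vW (P : Welt K) k : Wcoef P k.1 k.2 != 0 -> wkey k <= vW l rho sigma P.
Proof.
move=> ck; have /hasP [m mP /eqP mk] := sum_neq0_has ck.
rewrite -surjective_pairing in mk.
rewrite /vW; set s := [seq _ | _ <- _].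
have ks : wkey k \in s.
  by apply/mapP; exists m; rewrite ?mem_filter /wkey mk ?ck.
by case: s ks => [//|w s'] ks; apply: foldr_max_ub.
Qed.

Lemma vW_attained (P : Welt K) : Wnz P ->
  exists2 k, Wcoef P k.1 k.2 != 0 & wkey k = vW l rho sigma P.
Proof.
move=> /hasP [m mP cm].
pose s := [seq wt l rho sigma m.2.1 m.2.2 | m <- P & Wcoef P m.2.1 m.2.2 != 0].
have : wt l rho sigma m.2.1 m.2.2 \in s by apply: map_f; rewrite mem_filter cm.
rewrite -[vW _ _ _ _]/(match s with [::] => 0 | w :: s' => foldr Num.max w s' end).
case es: s => [//|w s'] _.
have /mapP [m'] : foldr Num.max w s' \in s by rewrite es foldr_max_mem.
by rewrite mem_filter => /andP [cm' _] ->; exists m'.2.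
Qed.

Lemma ellW_Wexp (P : Welt K) k : ellW l rho sigma P (Wexp k).1 (Wexp k).2 =
  if wkey k == vW l rho sigma P then Wcoef P k.1 k.2 else 0.
Proof. by rewrite /ellW Wcoefr_Wexp. Qed.

Definition bracket_weight (P Q : Welt K) : rat :=
  vW l rho sigma P + vW l rho sigma Q - (rho + sigma)%:~R.

Lemma Wcoefr_Wcomm_above (P Q : Welt K) a b : bracket_weight P Q < weight a b ->
  Wcoefr l (Wcomm l P Q) a b = 0.
Proof.
move=> hw; rewrite (Wcoefr_Wcomm_split (@wkey_le_vW P) (@wkey_le_vW Q) (ltW hw)).
rewrite big1 // => k1 _; have [->|c1] := eqVneq (Wcoef P k1.1 k1.2) 0; first by rewrite mul0r.
rewrite big1 ?mulr0 // => k2 _; have [->|c2] := eqVneq (Wcoef Q k2.1 k2.2) 0; first by rewrite mul0r.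
have := wkey_le_vW c1; have := wkey_le_vW c2; rewrite /bracket_weight in hw => le2 le1.
by rewrite pb_coef_eq0 ?mulr0 //; lra.
Qed.

Lemma Wcoefr_Wcomm_top (P Q : Welt K) a b : weight a b = bracket_weight P Q ->
  Wcoefr l (Wcomm l P Q) a b =
  \sum_(k1 <- Wkeys P) ellW l rho sigma P (Wexp k1).1 (Wexp k1).2 *
    \sum_(k2 <- Wkeys Q) ellW l rho sigma Q (Wexp k2).1 (Wexp k2).2 *
      pb_coef (Wexp k1) (Wexp k2) a b.
Proof.
move=> hw; have hle : bracket_weight P Q <= weight a b by rewrite hw.
rewrite (Wcoefr_Wcomm_split (@wkey_le_vW P) (@wkey_le_vW Q) hle).
have off_top (R : Welt K) k : Wcoef R k.1 k.2 != 0 -> wkey k != vW l rho sigma R ->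
    wkey k < vW l rho sigma R by move=> ck; rewrite lt_neqAle wkey_le_vW // andbT.
apply: eq_bigr => k1 _; rewrite ellW_Wexp.
have [c1|c1] := eqVneq (Wcoef P k1.1 k1.2) 0; first by rewrite c1; case: ifP; rewrite !mul0r.
have le1 := wkey_le_vW c1; case: eqP => [e1|/eqP /(off_top _ _ c1) lt1].
  congr (_ * _); apply: eq_bigr => k2 _; rewrite ellW_Wexp.
  have [c2|c2] := eqVneq (Wcoef Q k2.1 k2.2) 0; first by rewrite c2; case: ifP; rewrite !mul0r.
  case: eqP => [//|/eqP /(off_top _ _ c2) lt2].
  by rewrite pb_coef_eq0 ?mulr0 ?mul0r //; move: hw; rewrite /bracket_weight; lra.
rewrite mul0r big1 ?mulr0 // => k2 _.
have [->|c2] := eqVneq (Wcoef Q k2.1 k2.2) 0; first by rewrite mul0r.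
have le2 := wkey_le_vW c2.
by rewrite pb_coef_eq0 ?mulr0 //; move: hw; rewrite /bracket_weight; lra.
Qed.

(* [[P, Q]_(rho,sigma)] is the part of [[P, Q]] of weight [v(P) + v(Q) - (rho + sigma)]:
   nothing of larger weight survives in the commutator. *)
Lemma Wbr_top (P Q : Welt K) (F : rat -> nat -> K) :
  (forall a b, weight a b = bracket_weight P Q -> Wcoefr l (Wcomm l P Q) a b = F a b) ->
  (forall a b, weight a b != bracket_weight P Q -> F a b = 0) ->
  forall a b, Wbr l rho sigma P Q a b = F a b.
Proof.
move=> F_top F_off a b; rewrite /Wbr -/(bracket_weight P Q); set C := Wcomm l P Q.
have vC_top : Wnz C -> bracket_weight P Q <= vW l rho sigma C ->
    vW l rho sigma C = bracket_weight P Q.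
  move=> nzC le; apply/eqP; rewrite eq_le le andbT leNgt; apply/negP => lt.
  have [k ck vk] := vW_attained nzC.
  by move: ck; rewrite -Wcoefr_Wexp Wcoefr_Wcomm_above ?eqxx // weight_Wexp vk.
have [top|off] := eqVneq (weight a b) (bracket_weight P Q).
  rewrite -F_top //; case: ifP => [/andP [nzC le]|cond].
    by rewrite /ellW -[_ * a + _]/(weight a b) vC_top // top eqxx.
  apply/eqP; rewrite eq_sym; apply: contraFT cond => nzCab.
  have /hasP [m mC /andP [/eqP mb /eqP ma]] := sum_neq0_has nzCab.
  have em : Wexp m.2 = (a, b) by rewrite /Wexp ma mb.
  have cm : Wcoef C m.2.1 m.2.2 != 0 by rewrite -Wcoefr_Wexp em.
  have nzC : Wnz C by apply/hasP; exists m.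
  by rewrite nzC -top -[weight a b]/(weight (a, b).1 (a, b).2) -em weight_Wexp wkey_le_vW.
rewrite F_off //; case: ifP => // /andP [nzC le].
by rewrite /ellW -[_ * a + _]/(weight a b) vC_top // (negbTE off).
Qed.

Lemma ellW_neq0 (P : Welt K) a b : ellW l rho sigma P a b != 0 ->
  weight a b = vW l rho sigma P /\ ellW l rho sigma P a b = Wcoefr l P a b.
Proof. by rewrite /ellW -/(weight a b); case: (weight a b =P _) => [-> | _]; rewrite ?eqxx. Qed.

Lemma sum_monoL_Wexp (P : Welt K) (x : rat) (y : nat) (G : rat * nat -> K) :
  Wcoefr l P x y != 0 ->
  \sum_(k <- Wkeys P) monoL K x y%:Z (Wexp k).1 (Wexp k).2 * G (Wexp k) = G (x, y).
Proof.
move/sum_neq0_has/hasP => [m mP /andP [/eqP my /eqP mx]].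
have em : Wexp m.2 = (x, y) by rewrite /Wexp mx my.
have mkeys : m.2 \in Wkeys P by rewrite mem_undup map_f.
rewrite (bigD1_seq m.2) ?undup_uniq //= em /monoL mx my !eqxx mul1r big1 ?addr0 // => k km.
case: ifP; rewrite ?mul0r // => /andP [/eqP ex]; rewrite eqz_nat => /eqP ey.
by move: km; rewrite -(inj_eq Wexp_inj) em /Wexp ex ey eqxx.
Qed.

Definition line_form (n : nat) (c : nat -> K) (e : nat -> rat) (s : nat) (a : rat) (b : nat) : K :=
  \sum_(i < n) c i * monoL K (e i) (s + i)%N%:Z a b.

Lemma line_form_at n c e s (i : 'I_n) : line_form n c e s (e i) (s + i) = c i.
Proof.
rewrite /line_form (bigD1 i) //= /monoL !eqxx mulr1 big1 ?addr0 // => j ji.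
rewrite eqz_nat eqn_add2l; case: ifP; rewrite ?mulr0 // => /andP [_ /eqP ij].
by case/eqP: ji; apply: val_inj.
Qed.

Section LeadingForm.
Variables (P : Welt K) (n : nat) (c : nat -> K) (e : nat -> rat) (s : nat).
Hypothesis ellP : forall a b, ellW l rho sigma P a b = line_form n c e s a b.

Lemma vW_line_form (i : 'I_n) : c i != 0 -> vW l rho sigma P = weight (e i) (s + i).
Proof. by rewrite -(line_form_at c e s i) -ellP => /ellW_neq0 []. Qed.

Lemma sum_ellW_line_form (G : rat * nat -> K) :
  \sum_(k <- Wkeys P) ellW l rho sigma P (Wexp k).1 (Wexp k).2 * G (Wexp k) =
  \sum_(i < n) c i * G (e i, (s + i)%N).
Proof.
under eq_bigr => k _ do rewrite ellP big_distrl /=.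
rewrite exchange_big /=; apply: eq_bigr => i _.
have [->|ci] := eqVneq (c i) 0; first by rewrite mul0r big1 // => k _; rewrite !mul0r.
have ellPi : ellW l rho sigma P (e i) (s + i) = c i by rewrite ellP line_form_at.
have nzPi : Wcoefr l P (e i) (s + i) != 0.
  have nz : ellW l rho sigma P (e i) (s + i) != 0 by rewrite ellPi.
  by have [_ <-] := ellW_neq0 nz.
rewrite -(sum_monoL_Wexp G nzPi) big_distrr /=.
by apply: eq_bigr => k _; rewrite mulrA.
Qed.

End LeadingForm.

Lemma pb_coef_cross (K0 : [pchar K] =i pred0) (p q : rat * nat) a b :
  pb_coef p q a b =
  ratr (cross (q.1, q.2%:R) (p.1, p.2%:R)) * monoL K (p.1 + q.1 - 1) ((p.2 + q.2)%N%:Z - 1) a b.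
Proof.
rewrite /pb_coef /deriv_coef [q.1 + _]addrC [(q.2 + _)%N]addnC /monoL.
rewrite [_ - 1 == a]eq_sym [_ - 1 == b%:Z]eq_sym.
case: ifP => _; last by rewrite subrr mulr0.
by rewrite mulr1 /cross /= pchar0_ratrB // !pchar0_ratrM // !ratr_nat [ratr q.1 * _]mulrC.
Qed.

Definition lead_exp (r : int) (i : nat) : rat := r%:~R / l%:R - i%:R * sigma%:~R / rho%:~R.

Lemma lead_exp0 r : lead_exp r 0 = r%:~R / l%:R.
Proof. by rewrite /lead_exp !mul0r subr0. Qed.

Definition bracket_form (alpha beta : nat) (lam mu : nat -> K) (r u : int) (s v : nat)
    (a : rat) (b : nat) : K :=
  \sum_(i < alpha.+1) \sum_(j < beta.+1)
    lam i * mu j * ratr (cross (lead_exp u j, (v + j)%:R) (lead_exp r i, (s + i)%:R)) *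
    monoL K ((r + u)%:~R / l%:R - (i + j)%:R * sigma%:~R / rho%:~R - 1)
      ((s + v + i + j)%N%:Z - 1) a b.

Lemma Wcoefr_Wcomm_lead (K0 : [pchar K] =i pred0) (P Q : Welt K) (r u : int)
    (s v alpha beta : nat) (lam mu : nat -> K) :
  (forall a b, ellW l rho sigma P a b = line_form alpha.+1 lam (lead_exp r) s a b) ->
  (forall a b, ellW l rho sigma Q a b = line_form beta.+1 mu (lead_exp u) v a b) ->
  forall a b, weight a b = bracket_weight P Q ->
  Wcoefr l (Wcomm l P Q) a b = bracket_form alpha beta lam mu r u s v a b.
Proof.
move=> ellP ellQ a b top; rewrite Wcoefr_Wcomm_top //.
rewrite (sum_ellW_line_form ellP (fun p => \sum_(k <- Wkeys Q)
  ellW l rho sigma Q (Wexp k).1 (Wexp k).2 * pb_coef p (Wexp k) a b)).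
apply: eq_bigr => i _.
rewrite (sum_ellW_line_form ellQ (fun q => pb_coef (lead_exp r i, (s + i)%N) q a b)).
rewrite big_distrr /=.
apply: eq_bigr => j _; rewrite pb_coef_cross // /= !mulrA.
have -> : lead_exp r i + lead_exp u j - 1 =
    (r + u)%:~R / l%:R - (i + j)%:R * sigma%:~R / rho%:~R - 1.
  by rewrite /lead_exp intrD natrD; ring.
by rewrite addnA (addnAC s i v).
Qed.

Lemma bracket_form_off (rho0 : rho != 0) alpha beta lam mu r u s v a b :
  weight a b != weight (r%:~R / l%:R) s + weight (u%:~R / l%:R) v - (rho + sigma)%:~R ->
  bracket_form alpha beta lam mu r u s v a b = 0.
Proof.
move=> off; apply: big1 => i _; apply: big1 => j _.
rewrite /monoL; case: ifP => [/andP [/eqP ea /eqP eb]|_]; last by rewrite mulr0.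
case/eqP: off; rewrite /weight ea.
have -> : (b%:R : rat) = (s + v + i + j)%:R - 1 by rewrite -[b%:R]/((b%:Z)%:~R) eb intrB.
rewrite !natrD !intrD; field.
by rewrite l_neq0 intr_eq0 rho0.
Qed.

End WeylBracket.

Theorem proposition2p5 (K : fieldType) (hK : [pchar K] =i pred0)
  (l : nat) (hl : (0 < l)%N)
  (rho sigma : int) (hgcd : gcdz rho sigma = 1) (hpos : 0 < rho + sigma)
  (hsig : sigma <= 0)
  (P Q : Welt K) (hP : Wnz P) (hQ : Wnz Q)
  (r u : int) (s v alpha beta : nat) (lam mu : nat -> K)
  (hl0 : lam 0%N != 0) (hla : lam alpha != 0)
  (hm0 : mu 0%N != 0) (hmb : mu beta != 0)
  (hellP : forall (a : rat) (b : nat), ellW l rho sigma P a b =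
     \sum_(i < alpha.+1) lam i *
        monoL K (r%:~R / l%:R - i%:R * sigma%:~R / rho%:~R) (s + i)%N%:Z a b)
  (hellQ : forall (a : rat) (b : nat), ellW l rho sigma Q a b =
     \sum_(j < beta.+1) mu j *
        monoL K (u%:~R / l%:R - j%:R * sigma%:~R / rho%:~R) (v + j)%N%:Z a b) :
  forall (a : rat) (b : nat),
    Wbr l rho sigma P Q a b =
    \sum_(i < alpha.+1) \sum_(j < beta.+1)
      lam i * mu j *
      ratr (cross (u%:~R / l%:R - j%:R * sigma%:~R / rho%:~R, (v + j)%:R)
                  (r%:~R / l%:R - i%:R * sigma%:~R / rho%:~R, (s + i)%:R)) *
      monoL K ((r + u)%:~R / l%:R - (i + j)%:R * sigma%:~R / rho%:~R - 1)
              ((s + v + i + j)%N%:Z - 1) a b.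
Proof.
have rho0 : rho != 0 by rewrite gt_eqF //; lra.
have vP := vW_line_form (e := lead_exp l rho sigma r) hellP (i := ord0) hl0.
have vQ := vW_line_form (e := lead_exp l rho sigma u) hellQ (i := ord0) hm0.
apply: (Wbr_top hl hpos (F := bracket_form l rho sigma alpha beta lam mu r u s v)) => //.
  exact: Wcoefr_Wcomm_lead.
move=> a b off; apply: bracket_form_off => //.
by rewrite /bracket_weight vP vQ /= !lead_exp0 !addn0 in off.
Qed.
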